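(* Let $\gamma \in (0,1/6]$, let $n \geq 6$ be an integer, and let $\eta \geq \eta_1 := \max\{n, \frac{32}{\gamma^2}\log(3/\gamma)\}$. Then there exists a dataset $x_1,\dots,x_n$ (in $\mathbb{R}^d$ for some $d$) with $\|x_i\|\le 1$ for all $i$, linearly separable with maximum margin $\gamma$, such that for every integer $t$ with $1 \le t \leq n/(16\gamma)$ there exists $i \in [n]$ with $\langle w_t, x_i\rangle < 0$, where $(w_t)$ is gradient descent with step size $\eta$ on this dataset.
   Context: All labels are $+1$. Linear separability: some $w$ has $\langle w,x_i\rangle>0$ for all $i$. Maximum margin: $\max_{\|w\|=1}\min_i\langle w,x_i\rangle$. Loss $F(w) = \frac{1}{n}\sum_{i=1}^n \log(1+\exp(-\langle w, x_i\rangle))$. Gradient descent with constant step size $\eta$: $w_0 = 0$, $w_{t+1} = w_t - \eta\nabla F(w_t)$. *)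

From Stdlib Require Import Reals List.
From Coquelicot Require Import Coquelicot.
Import ListNotations.
Open Scope R_scope.

(* Vectors in R^d are functions nat -> R; only coordinates 0..d-1 matter. *)
Definition dot (d : nat) (u v : nat -> R) : R :=
  fold_right Rplus 0 (map (fun k => u k * v k) (seq 0 d)).

Definition vnorm (d : nat) (u : nat -> R) : R := sqrt (dot d u u).

(* Dataset x_0, ..., x_{n-1}, all labels +1. Logistic empirical risk. *)
Definition loss (d n : nat) (x : nat -> nat -> R) (w : nat -> R) : R :=
  / INR n * fold_right Rplus 0
    (map (fun i => ln (1 + exp (- dot d w (x i)))) (seq 0 n)).

Definition grad (d n : nat) (x : nat -> nat -> R) (w : nat -> R) : nat -> R :=
  fun j => Derive (fun s => loss d n x (fun k => if Nat.eqb k j then w k + s else w k)) 0.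

Fixpoint gd (d n : nat) (x : nat -> nat -> R) (eta : R) (t : nat) : nat -> R :=
  match t with
  | O => fun _ => 0
  | S t' => fun j => gd d n x eta t' j - eta * grad d n x (gd d n x eta t') j
  end.

Definition lin_separable (d n : nat) (x : nat -> nat -> R) : Prop :=
  exists w : nat -> R, forall i, (i < n)%nat -> dot d w (x i) > 0.

Definition max_margin (d n : nat) (x : nat -> nat -> R) (gamma : R) : Prop :=
  (exists w : nat -> R, vnorm d w = 1 /\
      forall i, (i < n)%nat -> gamma <= dot d w (x i)) /\
  (forall w : nat -> R, vnorm d w = 1 ->
      exists i, (i < n)%nat /\ dot d w (x i) <= gamma).

(* Take x_0 = (γ, -γ) and x_i = (γ, 1/2) for i >= 1.  The direction (1, 0) has
   margin γ on every point, and no unit vector does better on both x_0 and x_1.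
   One gradient step adds (η/n) Σ_i σ_i <x_i, x_0> to the margin <w, x_0>,
   where σ_i ∈ [0, 1] is the logistic weight of x_i.  Since <x_i, x_0> < 0 for
   i >= 1, every step adds at most 2γ²η/n, whereas the first step, taken at
   w_0 = 0 where all weights are 1/2, adds about -γη/4.  Hence <w_t, x_0> < 0
   as long as 16γt <= n.  The lower bound on η is only used through η > 0. *)
From Stdlib Require Import Reals List Lra Lia Psatz.
From Coquelicot Require Import Coquelicot.
Open Scope R_scope.

Definition rsum (l : list nat) (f : nat -> R) : R := fold_right Rplus 0 (map f l).

Lemma rsum_cons (a : nat) (l : list nat) (f : nat -> R) :
  rsum (a :: l) f = f a + rsum l f.
Proof. reflexivity. Qed.

Lemma rsum_ext_in (l : list nat) (f g : nat -> R) :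
  (forall i, In i l -> f i = g i) -> rsum l f = rsum l g.
Proof. intros Hfg; unfold rsum; f_equal; now apply map_ext_in. Qed.

Lemma rsum_ext (l : list nat) (f g : nat -> R) :
  (forall i, f i = g i) -> rsum l f = rsum l g.
Proof. intros Hfg; apply rsum_ext_in; auto. Qed.

Lemma rsum_plus (l : list nat) (f g : nat -> R) :
  rsum l (fun i => f i + g i) = rsum l f + rsum l g.
Proof. unfold rsum; induction l as [|a l IH]; cbn; [ring | rewrite IH; ring]. Qed.

Lemma rsum_scal (l : list nat) (c : R) (f : nat -> R) :
  rsum l (fun i => c * f i) = c * rsum l f.
Proof. unfold rsum; induction l as [|a l IH]; cbn; [ring | rewrite IH; ring]. Qed.

Lemma rsum_const (l : list nat) (c : R) :
  rsum l (fun _ => c) = INR (length l) * c.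
Proof.
  unfold rsum; induction l as [|a l IH]; [cbn; ring|].
  cbn [map fold_right length]; rewrite IH, S_INR; ring.
Qed.

Lemma rsum_le (l : list nat) (f g : nat -> R) :
  (forall i, In i l -> f i <= g i) -> rsum l f <= rsum l g.
Proof.
  induction l as [|a l IH]; intros Hfg; cbn; [lra|].
  apply Rplus_le_compat; [apply Hfg; left; reflexivity|].
  apply IH; intros i Hi; apply Hfg; right; exact Hi.
Qed.

Lemma rsum_swap (l1 l2 : list nat) (F : nat -> nat -> R) :
  rsum l1 (fun a => rsum l2 (F a)) = rsum l2 (fun b => rsum l1 (fun a => F a b)).
Proof.
  induction l1 as [|a l1 IH].
  - change (0 = rsum l2 (fun _ => 0)); rewrite rsum_const; ring.
  - change (rsum l2 (F a) + rsum l1 (fun a => rsum l2 (F a)) =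
            rsum l2 (fun b => F a b + rsum l1 (fun a => F a b))).
    now rewrite IH, rsum_plus.
Qed.

Lemma rsum_indicator (l : list nat) (j : nat) (f : nat -> R) :
  NoDup l -> In j l -> rsum l (fun k => if Nat.eqb k j then f k else 0) = f j.
Proof.
  induction l as [|a l IH]; intros Hnd Hj; [destruct Hj|].
  inversion Hnd as [|? ? Ha Hl]; subst.
  change ((if Nat.eqb a j then f a else 0) +
          rsum l (fun k => if Nat.eqb k j then f k else 0) = f j).
  destruct (Nat.eqb_spec a j) as [->|Haj].
  - rewrite (rsum_ext_in l _ (fun _ => 0)), rsum_const; [ring|].
    intros k Hk; destruct (Nat.eqb_spec k j); [subst; contradiction|reflexivity].
  - destruct Hj as [|Hj]; [contradiction|].
    rewrite IH by assumption; ring.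
Qed.

Lemma dot_0_l (d : nat) (v : nat -> R) : dot d (fun _ => 0) v = 0.
Proof.
  change (rsum (seq 0 d) (fun k => 0 * v k) = 0).
  rewrite (rsum_ext _ _ (fun _ => 0)), rsum_const; [ring | intros; ring].
Qed.

Lemma dot_self_ge0 (d : nat) (u : nat -> R) : 0 <= dot d u u.
Proof.
  apply Rle_trans with (rsum (seq 0 d) (fun _ => 0)).
  - rewrite rsum_const; lra.
  - apply (rsum_le (seq 0 d) (fun _ => 0) (fun k => u k * u k)); intros; nra.
Qed.

Lemma vnorm_eq1 (d : nat) (u : nat -> R) : vnorm d u = 1 -> dot d u u = 1.
Proof.
  unfold vnorm; intros Hu.
  rewrite <- (sqrt_sqrt (dot d u u)) by apply dot_self_ge0.
  rewrite Hu; ring.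
Qed.

Lemma dot_update (d j : nat) (w v : nat -> R) (s : R) : (j < d)%nat ->
  dot d (fun k => if Nat.eqb k j then w k + s else w k) v = dot d w v + s * v j.
Proof.
  intros Hj.
  change (rsum (seq 0 d) (fun k => (if Nat.eqb k j then w k + s else w k) * v k)
          = rsum (seq 0 d) (fun k => w k * v k) + s * v j).
  rewrite (rsum_ext _ _ (fun k => w k * v k + s * (if Nat.eqb k j then v k else 0))).
  - rewrite rsum_plus, rsum_scal, rsum_indicator; [reflexivity|apply seq_NoDup|].
    apply in_seq; lia.
  - intros k; destruct (Nat.eqb k j); ring.
Qed.

Lemma max_margin_separable (d n : nat) (x : nat -> nat -> R) (gamma : R) :
  0 < gamma -> max_margin d n x gamma -> lin_separable d n x.
Proof.
  intros Hg [[w [_ Hw]] _]; exists w; intros i Hi.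
  specialize (Hw i Hi); lra.
Qed.

(* [sigmoid_neg m] is [-l'(m)] for the logistic loss [l(m) = ln (1 + exp (-m))]. *)
Definition sigmoid_neg (m : R) : R := exp (- m) / (1 + exp (- m)).

Lemma sigmoid_neg_bounds (m : R) : 0 <= sigmoid_neg m <= 1.
Proof.
  unfold sigmoid_neg; pose proof (exp_pos (- m)) as He.
  split; [apply Rlt_le, Rdiv_lt_0_compat; lra|].
  apply Rmult_le_reg_r with (1 + exp (- m)); [lra|].
  unfold Rdiv; rewrite Rmult_assoc, Rinv_l by lra; lra.
Qed.

Lemma sigmoid_neg_0 : sigmoid_neg 0 = 1 / 2.
Proof. unfold sigmoid_neg; rewrite Ropp_0, exp_0; field. Qed.

Lemma is_derive_logistic_sum (l : list nat) (a b : nat -> R) (s : R) :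
  is_derive (fun s => rsum l (fun i => ln (1 + exp (- (a i + s * b i))))) s
            (rsum l (fun i => - b i * sigmoid_neg (a i + s * b i))).
Proof.
  induction l as [|i l IH]; cbn [rsum map fold_right] in *.
  - auto_derive; reflexivity.
  - apply (is_derive_plus (fun s => ln (1 + exp (- (a i + s * b i))))); [|exact IH].
    pose proof (exp_pos (- (a i + s * b i))).
    auto_derive; [lra|].
    unfold sigmoid_neg; field; lra.
Qed.

Section GradientDescent.

Variables (d n : nat) (x : nat -> nat -> R) (eta : R).

Lemma grad_logistic (w : nat -> R) (j : nat) : (j < d)%nat ->
  grad d n x w j = - / INR n * rsum (seq 0 n) (fun i => sigmoid_neg (dot d w (x i)) * x i j).
Proof.
  intros Hj; unfold grad, loss.
  rewrite (Derive_ext _ (fun s => / INR n *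
     rsum (seq 0 n) (fun i => ln (1 + exp (- (dot d w (x i) + s * x i j)))))).
  2:{ intros s; f_equal; apply rsum_ext; intros i; now rewrite dot_update. }
  erewrite is_derive_unique by (apply is_derive_scal, is_derive_logistic_sum).
  rewrite (rsum_ext _ _ (fun i => -1 * (sigmoid_neg (dot d w (x i)) * x i j))), rsum_scal.
  - ring.
  - intros i; rewrite Rmult_0_l, Rplus_0_r; ring.
Qed.

Lemma gd_succ (t j : nat) : (j < d)%nat -> (0 < n)%nat ->
  gd d n x eta (S t) j = gd d n x eta t j + eta / INR n *
    rsum (seq 0 n) (fun i => sigmoid_neg (dot d (gd d n x eta t) (x i)) * x i j).
Proof.
  intros Hj Hn; cbn [gd]; rewrite grad_logistic by exact Hj.
  assert (0 < INR n) by (apply lt_0_INR; exact Hn).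
  field; lra.
Qed.

Lemma gd_succ_dot (t : nat) (v : nat -> R) : (0 < n)%nat ->
  dot d (gd d n x eta (S t)) v = dot d (gd d n x eta t) v + eta / INR n *
    rsum (seq 0 n) (fun i => sigmoid_neg (dot d (gd d n x eta t) (x i)) * dot d (x i) v).
Proof.
  intros Hn; set (sg i := sigmoid_neg (dot d (gd d n x eta t) (x i))).
  change (rsum (seq 0 d) (fun k => gd d n x eta (S t) k * v k) =
    rsum (seq 0 d) (fun k => gd d n x eta t k * v k) + eta / INR n *
    rsum (seq 0 n) (fun i => sg i * rsum (seq 0 d) (fun k => x i k * v k))).
  rewrite (rsum_ext_in (seq 0 d) _ (fun k => gd d n x eta t k * v k +
     eta / INR n * rsum (seq 0 n) (fun i => v k * (sg i * x i k)))).
  - rewrite rsum_plus, rsum_scal, rsum_swap; do 2 f_equal.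
    apply rsum_ext; intros i; rewrite <- rsum_scal.
    apply rsum_ext; intros k; ring.
  - intros k Hk; apply in_seq in Hk.
    rewrite gd_succ, rsum_scal by (lia || exact Hn); subst sg; cbv beta.
    ring.
Qed.

End GradientDescent.

Definition slow_data (gamma : R) (i k : nat) : R :=
  if Nat.eqb k 0 then gamma else if Nat.eqb i 0 then - gamma else 1 / 2.

Lemma dot2 (u v : nat -> R) : dot 2 u v = u 0%nat * v 0%nat + u 1%nat * v 1%nat.
Proof. unfold dot; cbn; ring. Qed.

Lemma slow_data_norm_le1 (gamma : R) (i : nat) :
  0 <= gamma <= 1 / 2 -> vnorm 2 (slow_data gamma i) <= 1.
Proof.
  intros Hg; unfold vnorm; rewrite <- sqrt_1; apply sqrt_le_1_alt.
  rewrite dot2; unfold slow_data; cbn; destruct (Nat.eqb i 0); nra.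
Qed.

Lemma slow_data_max_margin (gamma : R) (n : nat) :
  0 < gamma -> (2 <= n)%nat -> max_margin 2 n (slow_data gamma) gamma.
Proof.
  intros Hg Hn.
  set (e0 := fun k : nat => if Nat.eqb k 0 then 1 else 0).
  split.
  - exists e0; split.
    + unfold vnorm; rewrite dot2; unfold e0; cbn.
      rewrite Rmult_1_l, Rmult_0_l, Rplus_0_r; apply sqrt_1.
    + intros i _; rewrite dot2; unfold slow_data; cbn; lra.
  - intros w Hw; apply vnorm_eq1 in Hw; rewrite dot2 in Hw.
    destruct (Rle_dec (dot 2 w (slow_data gamma 0)) gamma) as [H0|H0].
    { exists 0%nat; split; [lia|exact H0]. }
    exists 1%nat; split; [lia|]; apply Rnot_lt_le; intros H1.
    rewrite dot2 in H0, H1; unfold slow_data in H0, H1; cbn in H0, H1.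
    (* both margins above gamma force w0 - 1 > w1 > 2 gamma (1 - w0), i.e. w0 > 1 *)
    assert (Hw01 : w 0%nat - w 1%nat > 1).
    { apply Rmult_lt_reg_l with gamma; [exact Hg|]; lra. }
    assert (w 0%nat > 1) by nra.
    nra.
Qed.

Lemma slow_data_gram (gamma : R) (i : nat) :
  dot 2 (slow_data gamma i) (slow_data gamma 0) =
  if Nat.eqb i 0 then 2 * gamma ^ 2 else gamma ^ 2 - gamma / 2.
Proof. rewrite dot2; unfold slow_data; cbn; destruct (Nat.eqb i 0); field. Qed.

Lemma slow_drift_le (gamma : R) (n : nat) (s : nat -> R) :
  0 <= gamma <= 1 / 2 -> (forall i, 0 <= s i <= 1) ->
  rsum (seq 0 n) (fun i => s i * dot 2 (slow_data gamma i) (slow_data gamma 0))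
    <= 2 * gamma ^ 2.
Proof.
  intros Hg Hs; destruct n as [|n']; [cbn; nra|].
  rewrite <- cons_seq, rsum_cons, slow_data_gram; cbv [Nat.eqb].
  assert (rsum (seq 1 n')
            (fun i => s i * dot 2 (slow_data gamma i) (slow_data gamma 0)) <= 0).
  { rewrite <- (Rmult_0_r (INR (length (seq 1 n')))), <- rsum_const.
    apply rsum_le; intros i Hi; apply in_seq in Hi.
    rewrite slow_data_gram; destruct i as [|i]; [lia|].
    assert (gamma ^ 2 - gamma / 2 <= 0) by nra.
    specialize (Hs (S i)); cbv [Nat.eqb]; nra. }
  specialize (Hs 0%nat); nra.
Qed.

Lemma slow_drift_0 (gamma : R) (n' : nat) :
  rsum (seq 0 (S n')) (fun i => sigmoid_neg (dot 2 (fun _ => 0) (slow_data gamma i)) *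
                              dot 2 (slow_data gamma i) (slow_data gamma 0))
  = gamma ^ 2 + INR n' * ((gamma ^ 2 - gamma / 2) / 2).
Proof.
  rewrite <- cons_seq, rsum_cons.
  rewrite (rsum_ext_in (seq 1 n') _ (fun _ => (gamma ^ 2 - gamma / 2) / 2)).
  - rewrite rsum_const, length_seq, dot_0_l, slow_data_gram, sigmoid_neg_0.
    cbv [Nat.eqb]; field.
  - intros i Hi; apply in_seq in Hi.
    rewrite dot_0_l, slow_data_gram, sigmoid_neg_0.
    destruct i as [|i]; [lia|]; cbv [Nat.eqb]; field.
Qed.

Lemma slow_margin_le (gamma eta : R) (n' k : nat) :
  0 <= gamma <= 1 / 2 -> 0 <= eta ->
  dot 2 (gd 2 (S n') (slow_data gamma) eta (S k)) (slow_data gamma 0) <=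
  eta / INR (S n') *
    (gamma ^ 2 + INR n' * ((gamma ^ 2 - gamma / 2) / 2) + INR k * (2 * gamma ^ 2)).
Proof.
  intros Hg Heta.
  assert (Hc : 0 <= eta / INR (S n')).
  { apply Rmult_le_pos; [exact Heta|]; apply Rlt_le, Rinv_0_lt_compat, lt_0_INR; lia. }
  induction k as [|k IH]; rewrite gd_succ_dot by lia.
  - cbn [gd]; rewrite slow_drift_0, dot_0_l; cbn [INR]; lra.
  - pose proof (slow_drift_le gamma (S n')
      (fun i => sigmoid_neg (dot 2 (gd 2 (S n') (slow_data gamma) eta (S k)) (slow_data gamma i)))
      Hg (fun i => sigmoid_neg_bounds _)) as Hdrift; cbv beta in Hdrift.
    apply (Rmult_le_compat_l (eta / INR (S n'))) in Hdrift; [|exact Hc].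
    rewrite (S_INR k); lra.
Qed.

Lemma slow_margin_bound_neg (gamma : R) (n' k : nat) :
  0 < gamma <= 1 / 6 -> (5 <= n')%nat -> 16 * gamma * INR (S k) <= INR (S n') ->
  gamma ^ 2 + INR n' * ((gamma ^ 2 - gamma / 2) / 2) + INR k * (2 * gamma ^ 2) < 0.
Proof.
  intros Hg Hn Hk; rewrite !S_INR in Hk.
  assert (5 <= INR n') by (replace 5 with (INR 5) by (cbn; lra); apply le_INR; exact Hn).
  assert (Hkg : INR k * (2 * gamma ^ 2) <= gamma * (INR n' + 1) / 8 - 2 * gamma ^ 2) by nra.
  assert (Hng : gamma * (INR n' * (gamma / 2 - 1 / 8)) <= gamma * (- 5 / 24))
    by (apply Rmult_le_compat_l; nra).
  nra.
Qed.

Theorem lemma11 (gamma : R) (n : nat) (eta : R) :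
  0 < gamma -> gamma <= 1 / 6 -> (6 <= n)%nat ->
  Rmax (INR n) (32 / gamma ^ 2 * ln (3 / gamma)) <= eta ->
  exists (d : nat) (x : nat -> nat -> R),
    (forall i, (i < n)%nat -> vnorm d (x i) <= 1) /\
    lin_separable d n x /\
    max_margin d n x gamma /\
    (forall t : nat, (1 <= t)%nat -> INR t <= INR n / (16 * gamma) ->
       exists i, (i < n)%nat /\ dot d (gd d n x eta t) (x i) < 0).
Proof.
  intros Hg0 Hg1 Hn Heta.
  assert (Hmargin : max_margin 2 n (slow_data gamma) gamma)
    by (apply slow_data_max_margin; [exact Hg0 | lia]).
  exists 2%nat, (slow_data gamma); repeat split.
  - intros i _; apply slow_data_norm_le1; lra.
  - exact (max_margin_separable _ _ _ _ Hg0 Hmargin).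
  - exact (proj1 Hmargin).
  - exact (proj2 Hmargin).
  - intros t Ht1 Ht; destruct t as [|k]; [lia|]; destruct n as [|n']; [lia|].
    assert (Heta_pos : 0 < eta).
    { apply Rlt_le_trans with (INR (S n')); [apply lt_0_INR; lia|].
      exact (Rle_trans _ _ _ (Rmax_l _ _) Heta). }
    assert (Hk : 16 * gamma * INR (S k) <= INR (S n')).
    { apply Rle_div_r in Ht; lra. }
    pose proof (slow_margin_bound_neg gamma n' k (conj Hg0 Hg1) ltac:(lia) Hk).
    pose proof (slow_margin_le gamma eta n' k ltac:(lra) ltac:(lra)).
    assert (0 < eta / INR (S n'))
      by (apply Rdiv_lt_0_compat; [exact Heta_pos | apply lt_0_INR; lia]).
    exists 0%nat; split; [lia | nra].
Qed.
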